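(* Let $\boldsymbol{\mathcal{D}} = \begin{pmatrix}\boldsymbol{W}_p\\ \boldsymbol{U}_f \\ \boldsymbol{Y}_f\end{pmatrix}$ be a data matrix with full row rank and LQ decomposition as described in the context, let $\boldsymbol{Z}:=\begin{pmatrix}\boldsymbol{W}_p\\ \boldsymbol{U}_f\end{pmatrix}$, $\boldsymbol{\Pi}:=\boldsymbol{Z}^+\boldsymbol{Z}$, $\boldsymbol{\Pi}_\perp:=\boldsymbol{I}-\boldsymbol{\Pi}$, and $\lambda_a>0$. Then DeePC with regularization $h(\boldsymbol{a}) = \lambda_a \|\boldsymbol{\Pi}_\perp\boldsymbol{a}\|_2^2$ is equivalent to $\boldsymbol{\gamma}$-DDPC with regularization $\tilde h(\boldsymbol{\gamma}) = \lambda_a \|\boldsymbol{\gamma}_3\|_2^2$.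
   Context: $\boldsymbol{Z}^+$ denotes the Moore–Penrose pseudoinverse. Data: $m$ inputs, $p$ outputs, past horizon $N_p$, future horizon $N_f$, $L=N_p+N_f$, and $\ell$ data trajectories. The data matrix $\boldsymbol{\mathcal{D}}\in\mathbb{R}^{L(m+p)\times\ell}$ has blocks $\boldsymbol{W}_p\in\mathbb{R}^{N_p(m+p)\times\ell}$ (past inputs and outputs), $\boldsymbol{U}_f\in\mathbb{R}^{mN_f\times \ell}$, $\boldsymbol{Y}_f\in\mathbb{R}^{pN_f\times\ell}$ and is assumed to have full row rank. Its LQ decomposition is $\boldsymbol{\mathcal{D}} = \begin{pmatrix} \boldsymbol{L}_{11} & \boldsymbol{0} & \boldsymbol{0} & \boldsymbol{0} \\ \boldsymbol{L}_{21} & \boldsymbol{L}_{22} & \boldsymbol{0} & \boldsymbol{0} \\ \boldsymbol{L}_{31} & \boldsymbol{L}_{32} & \boldsymbol{L}_{33} & \boldsymbol{0} \end{pmatrix}\begin{pmatrix}\boldsymbol{Q}_1\\ \boldsymbol{Q}_2\\ \boldsymbol{Q}_3\\ \boldsymbol{Q}_4\end{pmatrix}$, with non-singular square diagonal blocks $\boldsymbol{L}_{11},\boldsymbol{L}_{22},\boldsymbol{L}_{33}$ (of sizes matching $\boldsymbol{W}_p,\boldsymbol{U}_f,\boldsymbol{Y}_f$) and $\boldsymbol{Q}=\begin{pmatrix}\boldsymbol{Q}_1^\top & \boldsymbol{Q}_2^\top&\boldsymbol{Q}_3^\top&\boldsymbol{Q}_4^\top\end{pmatrix}^\top\in\mathbb{R}^{\ell\times\ell}$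 orthogonal; $\boldsymbol{\gamma}_i := \boldsymbol{Q}_i\boldsymbol{a}$. Given current past I/O data $\boldsymbol{\xi}\in\mathbb{R}^{N_p(m+p)}$, a cost $J(\boldsymbol{\xi},\mathbf{u}_f,\mathbf{y}_f)$ and constraint sets $\mathcal{U}$, $\mathcal{Y}$: DeePC with regularization $h$ is the problem $\min_{\mathbf{u}_f,\mathbf{y}_f,\boldsymbol{a}} J(\boldsymbol{\xi},\mathbf{u}_f,\mathbf{y}_f)+h(\boldsymbol{a})$ s.t. $(\boldsymbol{\xi};\mathbf{u}_f;\mathbf{y}_f)=\boldsymbol{\mathcal{D}}\boldsymbol{a}$, $(\mathbf{u}_f,\mathbf{y}_f)\in\mathcal{U}\times\mathcal{Y}$. $\boldsymbol{\gamma}$-DDPC with regularization $\tilde h$ is the problem $\min_{\mathbf{u}_f,\mathbf{y}_f,\boldsymbol{\gamma}_2,\boldsymbol{\gamma}_3} J(\boldsymbol{\xi},\mathbf{u}_f,\mathbf{y}_f)+\tilde h(\boldsymbol{\gamma})$ s.t. $\boldsymbol{\gamma}_1=\boldsymbol{L}_{11}^{-1}\boldsymbol{\xi}$, $\mathbf{u}_f = \boldsymbol{L}_{21}\boldsymbol{\gamma}_1+\boldsymbol{L}_{22}\boldsymbol{\gamma}_2$, $\mathbf{y}_f=\boldsymbol{L}_{31}\boldsymbol{\gamma}_1+\boldsymbol{L}_{32}\boldsymbol{\gamma}_2+\boldsymbol{L}_{33}\boldsymbol{\gamma}_3$, $(\mathbf{u}_f,\mathbf{y}_f)\in\mathcal{U}\times\mathcal{Y}$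 (i.e., $\boldsymbol{\gamma}_4=\boldsymbol{0}$ is fixed). Two such optimal control problems are called equivalent if, for every $\boldsymbol{\xi}$, they yield the same optimal predicted input/output trajectories $(\mathbf{u}_f^\ast,\mathbf{y}_f^\ast)$ (not necessarily the same optimal cost). *)

From HB Require Import structures.
From mathcomp Require Import all_boot all_order all_algebra.
Set Implicit Arguments. Unset Strict Implicit. Unset Printing Implicit Defensive.
Import Order.TTheory GRing.Theory Num.Theory.
Local Open Scope ring_scope.

Section DDPC.
Variable R : realFieldType.

Definition sqnorm n (v : 'cV[R]_n) : R := \sum_(i < n) (v i 0) ^+ 2.

(* X is the Moore-Penrose pseudoinverse of Z (the four Penrose conditions;
   over the reals the adjoint is the transpose). *)
Definition is_MP_pinv r c (Z : 'M[R]_(r, c)) (X : 'M[R]_(c, r)) : Prop :=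
  [/\ Z *m X *m Z = Z, X *m Z *m X = X,
      (Z *m X)^T = Z *m X & (X *m Z)^T = X *m Z].

Variables (nW nU nY q4 l : nat).

Definition deepc_feasible (D : 'M[R]_(nW + (nU + nY), l))
  (U : 'cV[R]_nU -> Prop) (Y : 'cV[R]_nY -> Prop)
  (xi : 'cV[R]_nW) (u : 'cV[R]_nU) (y : 'cV[R]_nY) (a : 'cV[R]_l) : Prop :=
  col_mx xi (col_mx u y) = D *m a /\ U u /\ Y y.

Definition deepc_optimal (D : 'M[R]_(nW + (nU + nY), l))
  (h : 'cV[R]_l -> R)
  (J : 'cV[R]_nW -> 'cV[R]_nU -> 'cV[R]_nY -> R)
  (U : 'cV[R]_nU -> Prop) (Y : 'cV[R]_nY -> Prop)
  (xi : 'cV[R]_nW) (u : 'cV[R]_nU) (y : 'cV[R]_nY) : Prop :=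
  exists a, deepc_feasible D U Y xi u y a /\
    forall u' y' a', deepc_feasible D U Y xi u' y' a' ->
      J xi u y + h a <= J xi u' y' + h a'.

Definition gddpc_feasible (L11 : 'M[R]_nW) (L21 : 'M[R]_(nU, nW))
  (L22 : 'M[R]_nU) (L31 : 'M[R]_(nY, nW)) (L32 : 'M[R]_(nY, nU))
  (L33 : 'M[R]_nY)
  (U : 'cV[R]_nU -> Prop) (Y : 'cV[R]_nY -> Prop)
  (xi : 'cV[R]_nW) (u : 'cV[R]_nU) (y : 'cV[R]_nY)
  (g2 : 'cV[R]_nU) (g3 : 'cV[R]_nY) : Prop :=
  let g1 := invmx L11 *m xi in
  u = L21 *m g1 + L22 *m g2 /\
  y = L31 *m g1 + L32 *m g2 + L33 *m g3 /\ U u /\ Y y.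

Definition gddpc_optimal (L11 : 'M[R]_nW) (L21 : 'M[R]_(nU, nW))
  (L22 : 'M[R]_nU) (L31 : 'M[R]_(nY, nW)) (L32 : 'M[R]_(nY, nU))
  (L33 : 'M[R]_nY)
  (ht : 'cV[R]_nW -> 'cV[R]_nU -> 'cV[R]_nY -> 'cV[R]_q4 -> R)
  (J : 'cV[R]_nW -> 'cV[R]_nU -> 'cV[R]_nY -> R)
  (U : 'cV[R]_nU -> Prop) (Y : 'cV[R]_nY -> Prop)
  (xi : 'cV[R]_nW) (u : 'cV[R]_nU) (y : 'cV[R]_nY) : Prop :=
  let g1 := invmx L11 *m xi in
  exists g2 g3, gddpc_feasible L11 L21 L22 L31 L32 L33 U Y xi u y g2 g3 /\
    forall u' y' g2' g3',
      gddpc_feasible L11 L21 L22 L31 L32 L33 U Y xi u' y' g2' g3' ->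
      J xi u y + ht g1 g2 g3 0 <= J xi u' y' + ht g1 g2' g3' 0.

Definition ocp_equivalent
  (P1 P2 : 'cV[R]_nW -> 'cV[R]_nU -> 'cV[R]_nY -> Prop) : Prop :=
  forall xi u y, P1 xi u y <-> P2 xi u y.

End DDPC.

From HB Require Import structures.
From mathcomp Require Import all_boot all_order all_algebra.
Set Implicit Arguments. Unset Strict Implicit.
Unset Printing Implicit Defensive.
Import Order.TTheory GRing.Theory Num.Theory.
Local Open Scope ring_scope.

(* Change variables a = Q^T gamma, a bijection since Q is orthogonal.  The
   rows of Q1 and Q2 span the row space of Z = (Wp; Uf), while Q3^T gamma3 +
   Q4^T gamma4 lies in the kernel of Z; hence Pi_perp (Q^T gamma) =
   Q^T (0; 0; gamma3; gamma4) and the DeePC regularizer equals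
   lambda (|gamma3|^2 + |gamma4|^2).  The DeePC constraint becomes the
   gamma-DDPC constraint, with gamma4 free.  Since gamma4 only adds a
   nonnegative cost, optimal solutions have gamma4 = 0, leaving exactly
   gamma-DDPC. *)

Section SquaredNorm.
Variable R : realFieldType.

Lemma sqnormE n (v : 'cV[R]_n) : sqnorm v = (v^T *m v) 0 0.
Proof. by rewrite /sqnorm mxE; apply: eq_bigr => i _; rewrite !mxE expr2. Qed.

Lemma sqnorm_ge0 n (v : 'cV[R]_n) : 0 <= sqnorm v.
Proof. by apply: sumr_ge0 => i _; apply: sqr_ge0. Qed.

Lemma sqnorm0 n : sqnorm (0 : 'cV[R]_n) = 0.
Proof. by apply: big1 => i _; rewrite mxE expr0n. Qed.

Lemma sqnorm_col_mx n1 n2 (a : 'cV[R]_n1) (b : 'cV[R]_n2) :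
  sqnorm (col_mx a b) = sqnorm a + sqnorm b.
Proof.
rewrite /sqnorm big_split_ord /=.
by congr (_ + _); apply: eq_bigr => i _; rewrite ?col_mxEu ?col_mxEd.
Qed.

Lemma sqnorm_trmx_mul n k (Q : 'M[R]_(n, k)) (v : 'cV[R]_n) :
  Q *m Q^T = 1%:M -> sqnorm (Q^T *m v) = sqnorm v.
Proof.
by move=> QQT; rewrite !sqnormE trmx_mul trmxK mulmxA -(mulmxA v^T) QQT mulmx1.
Qed.

End SquaredNorm.

Lemma MP_proj_perp_mul_tr (R : realFieldType) r c
    (Z : 'M[R]_(r, c)) (X : 'M[R]_(c, r)) :
  is_MP_pinv Z X -> (1%:M - X *m Z) *m Z^T = 0.
Proof.
case=> ZXZ _ _ XZ_sym.
by rewrite mulmxBl mul1mx -XZ_sym -trmx_mul mulmxA ZXZ subrr.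
Qed.

Section GammaCoordinates.
Variables (R : realFieldType) (n1 n2 n3 n4 : nat).
Local Notation l := (n1 + (n2 + (n3 + n4)))%N.
Variables (Q1 : 'M[R]_(n1, l)) (Q2 : 'M[R]_(n2, l)).
Variables (Q3 : 'M[R]_(n3, l)) (Q4 : 'M[R]_(n4, l)).
Let Q := col_mx Q1 (col_mx Q2 (col_mx Q3 Q4)).
Hypothesis Q_orth : Q *m Q^T = 1%:M.

Definition a_of_gamma (g1 : 'cV[R]_n1) (g2 : 'cV[R]_n2) (g3 : 'cV[R]_n3)
    (g4 : 'cV[R]_n4) : 'cV[R]_l :=
  Q^T *m col_mx g1 (col_mx g2 (col_mx g3 g4)).

Lemma a_of_gammaE g1 g2 g3 g4 :
  a_of_gamma g1 g2 g3 g4 = Q1^T *m g1 + Q2^T *m g2 + Q3^T *m g3 + Q4^T *m g4.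
Proof. by rewrite /a_of_gamma /Q !tr_col_mx !mul_row_col !addrA. Qed.

Lemma blocks_a_of_gamma g1 g2 g3 g4 (a := a_of_gamma g1 g2 g3 g4) :
  [/\ Q1 *m a = g1, Q2 *m a = g2, Q3 *m a = g3 & Q4 *m a = g4].
Proof.
have : Q *m a = col_mx g1 (col_mx g2 (col_mx g3 g4)).
  by rewrite /a /a_of_gamma mulmxA Q_orth mul1mx.
by rewrite /Q !mul_col_mx => /eq_col_mx[-> /eq_col_mx[-> /eq_col_mx[-> ->]]].
Qed.

Lemma a_of_gamma_blocks a :
  a = a_of_gamma (Q1 *m a) (Q2 *m a) (Q3 *m a) (Q4 *m a).
Proof. by rewrite /a_of_gamma -!mul_col_mx -/Q mulmxA mulmx1C // mul1mx. Qed.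

Lemma sqnorm_a_of_gamma g1 g2 g3 g4 :
  sqnorm (a_of_gamma g1 g2 g3 g4) =
  sqnorm g1 + (sqnorm g2 + (sqnorm g3 + sqnorm g4)).
Proof. by rewrite sqnorm_trmx_mul // !sqnorm_col_mx. Qed.

Variables (Wp : 'M[R]_(n1, l)) (Uf : 'M[R]_(n2, l)) (Yf : 'M[R]_(n3, l)).
Variables (L11 : 'M[R]_n1) (L21 : 'M[R]_(n2, n1)) (L22 : 'M[R]_n2).
Variables (L31 : 'M[R]_(n3, n1)) (L32 : 'M[R]_(n3, n2)) (L33 : 'M[R]_n3).
Hypotheses (L11_unit : L11 \in unitmx) (L22_unit : L22 \in unitmx).
Hypotheses (Wp_LQ : Wp = L11 *m Q1) (Uf_LQ : Uf = L21 *m Q1 + L22 *m Q2).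
Hypothesis Yf_LQ : Yf = L31 *m Q1 + L32 *m Q2 + L33 *m Q3.

Lemma data_mul_a_of_gamma g1 g2 g3 g4 :
  col_mx Wp (col_mx Uf Yf) *m a_of_gamma g1 g2 g3 g4 =
  col_mx (L11 *m g1)
    (col_mx (L21 *m g1 + L22 *m g2) (L31 *m g1 + L32 *m g2 + L33 *m g3)).
Proof.
have [a1 a2 a3 _] := blocks_a_of_gamma g1 g2 g3 g4.
by rewrite !mul_col_mx Wp_LQ Uf_LQ Yf_LQ !mulmxDl -!mulmxA a1 a2 a3.
Qed.

Lemma deepc_feasible_a_of_gamma U Y xi u y g1 g2 g3 g4 :
  deepc_feasible (col_mx Wp (col_mx Uf Yf)) U Y xi u y
    (a_of_gamma g1 g2 g3 g4) <->
  g1 = invmx L11 *m xi /\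
  gddpc_feasible L11 L21 L22 L31 L32 L33 U Y xi u y g2 g3.
Proof.
rewrite /deepc_feasible /gddpc_feasible data_mul_a_of_gamma; split.
  by case=> /eq_col_mx[-> /eq_col_mx[-> ->]] [Uu Yy]; rewrite mulKmx.
by case=> -> [-> [-> [Uu Yy]]]; rewrite mulKVmx.
Qed.

Variable Zp : 'M[R]_(l, n1 + n2).
Hypothesis Zp_pinv : is_MP_pinv (col_mx Wp Uf) Zp.
Let Pi_perp := 1%:M - Zp *m col_mx Wp Uf.

Lemma proj_perp_Q12 : Pi_perp *m Q1^T = 0 /\ Pi_perp *m Q2^T = 0.
Proof.
have /eq_row_mx[PWp PUf] :
    row_mx (Pi_perp *m Wp^T) (Pi_perp *m Uf^T) = row_mx 0 0.
  by rewrite row_mx0 -mul_mx_row -tr_col_mx MP_proj_perp_mul_tr.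
have Q1T : Q1^T = Wp^T *m invmx L11^T.
  by rewrite Wp_LQ trmx_mul mulmxK ?unitmx_tr.
have Q2T : Q2^T = (Uf^T - Q1^T *m L21^T) *m invmx L22^T.
  by rewrite Uf_LQ linearD /= !trmx_mul addrC addKr mulmxK ?unitmx_tr.
have PQ1 : Pi_perp *m Q1^T = 0 by rewrite Q1T mulmxA PWp mul0mx.
by rewrite Q2T mulmxA mulmxBr PUf mulmxA PQ1 mul0mx subrr mul0mx.
Qed.

Lemma proj_perp_a_of_gamma g1 g2 g3 g4 :
  Pi_perp *m a_of_gamma g1 g2 g3 g4 = a_of_gamma 0 0 g3 g4.
Proof.
have [PQ1 PQ2] := proj_perp_Q12.
have -> : a_of_gamma g1 g2 g3 g4 =
          Q1^T *m g1 + Q2^T *m g2 + a_of_gamma 0 0 g3 g4.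
  by rewrite !a_of_gammaE !mulmx0 !add0r !addrA.
have Z_ker : col_mx Wp Uf *m a_of_gamma 0 0 g3 g4 = 0.
  have := data_mul_a_of_gamma 0 0 g3 g4.
  rewrite !mul_col_mx !mulmx0 !add0r => /eq_col_mx[-> /eq_col_mx[-> _]].
  by rewrite col_mx0.
rewrite !mulmxDr (mulmxA _ Q1^T) (mulmxA _ Q2^T) PQ1 PQ2 !mul0mx !add0r.
by rewrite mulmxBl mul1mx -mulmxA Z_ker mulmx0 subr0.
Qed.

Variables (lambda : R) (J : 'cV[R]_n1 -> 'cV[R]_n2 -> 'cV[R]_n3 -> R).
Variables (U : 'cV[R]_n2 -> Prop) (Y : 'cV[R]_n3 -> Prop).
Hypothesis lambda_ge0 : 0 <= lambda.

Let h (a : 'cV[R]_l) := lambda * sqnorm (Pi_perp *m a).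
Let ht (g1 : 'cV[R]_n1) (g2 : 'cV[R]_n2) (g3 : 'cV[R]_n3) (g4 : 'cV[R]_n4) :=
  lambda * sqnorm g3.

Lemma deepc_reg_a_of_gamma g1 g2 g3 g4 :
  h (a_of_gamma g1 g2 g3 g4) = lambda * (sqnorm g3 + sqnorm g4).
Proof.
by rewrite /h proj_perp_a_of_gamma sqnorm_a_of_gamma !sqnorm0 !add0r.
Qed.

Lemma gamma_reg_le_deepc_reg g1 g2 g3 g4 :
  ht g1 g2 g3 0 <= h (a_of_gamma g1 g2 g3 g4).
Proof. by rewrite deepc_reg_a_of_gamma ler_wpM2l // lerDl sqnorm_ge0. Qed.

Lemma gamma_reg_eq_deepc_reg g1 g2 g3 :
  ht g1 g2 g3 0 = h (a_of_gamma g1 g2 g3 0).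
Proof. by rewrite deepc_reg_a_of_gamma sqnorm0 addr0. Qed.

Lemma deepc_optimal_gddpc xi u y :
  deepc_optimal (col_mx Wp (col_mx Uf Yf)) h J U Y xi u y ->
  gddpc_optimal L11 L21 L22 L31 L32 L33 ht J U Y xi u y.
Proof.
case=> a []; rewrite [a]a_of_gamma_blocks.
set g1 := Q1 *m a; set g2 := Q2 *m a; set g3 := Q3 *m a.
move=> /deepc_feasible_a_of_gamma[g1E feas] opt.
exists g2, g3; split=> // u' y' g2' g3' feas'.
have feas_a' := proj2 (deepc_feasible_a_of_gamma _ _ _ _ _ g1 g2' g3' 0)
                      (conj g1E feas').
rewrite -g1E (gamma_reg_eq_deepc_reg g1 g2').
apply: le_trans (opt _ _ _ feas_a').
by rewrite lerD2l gamma_reg_le_deepc_reg.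
Qed.

Lemma gddpc_optimal_deepc xi u y :
  gddpc_optimal L11 L21 L22 L31 L32 L33 ht J U Y xi u y ->
  deepc_optimal (col_mx Wp (col_mx Uf Yf)) h J U Y xi u y.
Proof.
case=> g2 [g3 [feas opt]].
exists (a_of_gamma (invmx L11 *m xi) g2 g3 0).
split; first exact/deepc_feasible_a_of_gamma.
move=> u' y' a'; rewrite [a']a_of_gamma_blocks.
move=> /deepc_feasible_a_of_gamma[g1E' feas'].
rewrite -gamma_reg_eq_deepc_reg; apply: le_trans (opt _ _ _ _ feas') _.
by rewrite lerD2l -g1E' gamma_reg_le_deepc_reg.
Qed.

End GammaCoordinates.

Theorem proposition4 (R : realFieldType) (m p Np Nf q4 l : nat)
  (Wp : 'M[R]_(Np * (m + p), l)) (Uf : 'M[R]_(m * Nf, l))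
  (Yf : 'M[R]_(p * Nf, l))
  (L11 : 'M[R]_(Np * (m + p))) (L21 : 'M[R]_(m * Nf, Np * (m + p)))
  (L22 : 'M[R]_(m * Nf)) (L31 : 'M[R]_(p * Nf, Np * (m + p)))
  (L32 : 'M[R]_(p * Nf, m * Nf)) (L33 : 'M[R]_(p * Nf))
  (Q1 : 'M[R]_(Np * (m + p), l)) (Q2 : 'M[R]_(m * Nf, l))
  (Q3 : 'M[R]_(p * Nf, l)) (Q4 : 'M[R]_(q4, l))
  (Zp : 'M[R]_(l, Np * (m + p) + m * Nf)) (lambda_a : R) :
  (* full row rank of the data matrix *)
  row_free (col_mx Wp (col_mx Uf Yf)) ->
  (* Q = (Q1; Q2; Q3; Q4) is an l x l orthogonal matrix *)
  l = (Np * (m + p) + (m * Nf + (p * Nf + q4)))%N ->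
  (let Q := col_mx Q1 (col_mx Q2 (col_mx Q3 Q4)) in Q *m Q^T = 1%:M) ->
  (* LQ decomposition with non-singular diagonal blocks *)
  L11 \in unitmx -> L22 \in unitmx -> L33 \in unitmx ->
  Wp = L11 *m Q1 ->
  Uf = L21 *m Q1 + L22 *m Q2 ->
  Yf = L31 *m Q1 + L32 *m Q2 + L33 *m Q3 ->
  (* Zp is the Moore-Penrose pseudoinverse of Z = (Wp; Uf) *)
  is_MP_pinv (col_mx Wp Uf) Zp ->
  0 < lambda_a ->
  let Pi := Zp *m col_mx Wp Uf in
  let Pi_perp := 1%:M - Pi in
  forall (J : 'cV[R]_(Np * (m + p)) -> 'cV[R]_(m * Nf) -> 'cV[R]_(p * Nf) -> R)
         (U : 'cV[R]_(m * Nf) -> Prop) (Y : 'cV[R]_(p * Nf) -> Prop),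
  ocp_equivalent
    (deepc_optimal (col_mx Wp (col_mx Uf Yf))
       (fun a => lambda_a * sqnorm (Pi_perp *m a)) J U Y)
    (gddpc_optimal L11 L21 L22 L31 L32 L33
       (fun (g1 : 'cV[R]_(Np * (m + p))) (g2 : 'cV[R]_(m * Nf))
            (g3 : 'cV[R]_(p * Nf)) (g4 : 'cV[R]_q4) =>
          lambda_a * sqnorm g3) J U Y).
Proof.
move=> _ l_eq Q_orth L11_unit L22_unit _ Wp_LQ Uf_LQ Yf_LQ Zp_pinv lambda_gt0.
move=> Pi Pi_perp J U Y xi u y; subst l.
have lambda_ge0 := ltW lambda_gt0.
split.
  exact: (deepc_optimal_gddpc Q_orth L11_unit L22_unit Wp_LQ Uf_LQ Yf_LQ
            Zp_pinv lambda_ge0).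
exact: (gddpc_optimal_deepc Q_orth L11_unit L22_unit Wp_LQ Uf_LQ Yf_LQ
          Zp_pinv lambda_ge0).
Qed.
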